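(* Let $E$ be a bounded spectral family in a $\sigma$-complete orthomodular lattice $\mathbb{L}$. Then the function $f_E:\mathcal{Q}(\mathbb{L})\to\mathbb{R}$, $f_E(\mathfrak{B}):=\inf\{\lambda\in\mathbb{R}\mid E_\lambda\in\mathfrak{B}\}$, is continuous.
   Context: A spectral family in a $\sigma$-complete lattice $\mathbb{L}$ (with $0$ and $1$) is a map $E:\mathbb{R}\to\mathbb{L}$ with (1) $E_\lambda\le E_\mu$ for $\lambda\le\mu$; (2) $E_\lambda=\bigwedge_{\mu>\lambda}E_\mu$; (3) $\bigwedge_\lambda E_\lambda=0$, $\bigvee_\lambda E_\lambda=1$. $E$ is bounded if there are $a\le b$ with $E_\lambda=0$ for $\lambda<a$ and $E_\lambda=1$ for $\lambda\ge b$. A quasipoint of $\mathbb{L}$ is a maximal dual ideal (a dual ideal being a nonempty, upward closed subset not containing $0$ and closed under finite meets). The Stone spectrum $\mathcal{Q}(\mathbb{L})$ is the set of quasipoints with topology generated by the base $\mathcal{Q}_a(\mathbb{L})=\{\mathfrak{B}\mid a\in\mathfrak{B}\}$, $a\in\mathbb{L}$. *)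

From HB Require Import structures.
From mathcomp Require Import all_boot all_order all_algebra.
From mathcomp Require Import all_classical all_reals all_analysis.
Set Implicit Arguments. Unset Strict Implicit. Unset Printing Implicit Defensive.
Import Order.TTheory GRing.Theory Num.Theory.
Local Open Scope classical_set_scope.
Local Open Scope ring_scope.

Definition is_glb (T : Type) (le : T -> T -> Prop) (S : set T) (x : T) : Prop :=
  (forall y, S y -> le x y) /\ (forall z, (forall y, S y -> le z y) -> le z x).
Definition is_lub (T : Type) (le : T -> T -> Prop) (S : set T) (x : T) : Prop :=
  (forall y, S y -> le y x) /\ (forall z, (forall y, S y -> le y z) -> le x z).

Record SigmaOML := {
  carrier :> Type;
  le : carrier -> carrier -> Prop;
  meet : carrier -> carrier -> carrier;
  join : carrier -> carrier -> carrier;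
  zero : carrier;
  one : carrier;
  orth : carrier -> carrier;
  le_refl : forall a, le a a;
  le_antisym : forall a b, le a b -> le b a -> a = b;
  le_trans : forall a b c, le a b -> le b c -> le a c;
  meet_glb : forall a b, is_glb le [set x | x = a \/ x = b] (meet a b);
  join_lub : forall a b, is_lub le [set x | x = a \/ x = b] (join a b);
  zero_le : forall a, le zero a;
  le_one : forall a, le a one;
  orth_invol : forall a, orth (orth a) = a;
  orth_anti : forall a b, le a b -> le (orth b) (orth a);
  meet_orth : forall a, meet a (orth a) = zero;
  join_orth : forall a, join a (orth a) = one;
  orthomodular : forall a b, le a b -> b = join a (meet b (orth a));
  sigma_glb : forall s : nat -> carrier, exists x, is_glb le (range s) x;
  sigma_lub : forall s : nat -> carrier, exists x, is_lub le (range s) x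
}.

Section Defs.
Variable L : SigmaOML.
Variable R : realType.

Definition spectral_family (E : R -> L) : Prop :=
  (forall l m, l <= m -> le (E l) (E m)) /\
  (forall l, is_glb (@le L) [set E m | m in [set m | l < m]] (E l)) /\
  is_glb (@le L) (range E) (zero L) /\
  is_lub (@le L) (range E) (one L).

Definition bounded_spectral_family (E : R -> L) : Prop :=
  spectral_family E /\
  exists a b : R, a <= b /\ (forall l, l < a -> E l = zero L) /\
                  (forall l, b <= l -> E l = one L).

Definition dual_ideal (D : set L) : Prop :=
  (exists a, D a) /\
  (forall a b, D a -> le a b -> D b) /\
  ~ D (zero L) /\
  (forall a b, D a -> D b -> D (meet a b)).

Definition is_quasipoint (B : set L) : Prop :=
  dual_ideal B /\ (forall D, dual_ideal D -> B `<=` D -> D = B).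

Definition quasipoint := {B : set L | is_quasipoint B}.

(* Open sets of the Stone spectrum: the topology generated by the base
   Q_a = {B | a \in B}. *)
Definition stone_open (U : set quasipoint) : Prop :=
  forall B, U B -> exists a : L, proj1_sig B a /\
    (forall B' : quasipoint, proj1_sig B' a -> U B').

Definition f_E (E : R -> L) (B : quasipoint) : R :=
  inf [set l | proj1_sig B (E l)].

End Defs.

(* Let l0 := f_E(B) and mu < l0 < nu. Then E_nu lies in B while E_mu does not,
   so by maximality of B some y in B has y /\ E_mu = 0. Every quasipoint B'
   containing y /\ E_nu contains E_nu, giving f_E(B') <= nu, and no E_l with
   l < mu, giving mu <= f_E(B'). So f_E maps the basic open set Q_(y /\ E_nu)
   around B into [mu, nu]. *)
From Pilot Require Import Defs.
From mathcomp Require Import all_boot all_order all_algebra.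
From mathcomp Require Import all_classical all_reals all_analysis.
From mathcomp Require Import lra.
Import Order.TTheory GRing.Theory Num.Theory.
Import numFieldTopology.Exports numFieldNormedType.Exports.
Local Open Scope classical_set_scope.
Local Open Scope ring_scope.

Section DualIdeals.
Set Implicit Arguments. Unset Strict Implicit.
Variable L : SigmaOML.

Lemma meet_lel (a b : L) : Defs.le (Defs.meet a b) a.
Proof. by case: (meet_glb a b) => lb _; apply: lb; left. Qed.

Lemma meet_ler (a b : L) : Defs.le (Defs.meet a b) b.
Proof. by case: (meet_glb a b) => lb _; apply: lb; right. Qed.

Lemma le_meet (a b c : L) :
  Defs.le c a -> Defs.le c b -> Defs.le c (Defs.meet a b).
Proof. by case: (meet_glb a b) => _ glb ca cb; apply: glb => y [->|->]. Qed.

Lemma le_zero (a : L) : Defs.le a (Defs.zero L) -> a = Defs.zero L.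
Proof. by move=> a0; apply: Defs.le_antisym a0 (Defs.zero_le a). Qed.

Lemma meet_monol (w y a : L) :
  Defs.le w y -> Defs.le (Defs.meet w a) (Defs.meet y a).
Proof.
move=> wy; apply: le_meet; last exact: meet_ler.
exact: Defs.le_trans (meet_lel _ _) wy.
Qed.

Lemma dual_ideal_one (D : set L) : dual_ideal D -> D (Defs.one L).
Proof. by move=> [[x Dx] [Dup _]]; apply: Dup Dx (Defs.le_one x). Qed.

Lemma dual_ideal_adjoin (B : set L) (a : L) : dual_ideal B ->
  (forall y, B y -> Defs.meet y a <> Defs.zero L) ->
  dual_ideal [set z | exists2 y, B y & Defs.le (Defs.meet y a) z].
Proof.
move=> [[x Bx] [_ [_ BI]]] Ba0; split.
  by exists (Defs.meet x a), x => //; apply: Defs.le_refl.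
split; first by move=> u v [y By yu] uv; exists y => //; apply: Defs.le_trans uv.
split; first by move=> [y By /le_zero]; exact: Ba0.
move=> u v [y1 By1 y1u] [y2 By2 y2v]; exists (Defs.meet y1 y2); first exact: BI.
apply: le_meet; [apply: Defs.le_trans y1u | apply: Defs.le_trans y2v];
  apply: meet_monol; [exact: meet_lel | exact: meet_ler].
Qed.

Lemma quasipoint_meet_zero (B : set L) (a : L) : is_quasipoint B -> ~ B a ->
  exists2 y, B y & Defs.meet y a = Defs.zero L.
Proof.
move=> [dB Bmax] Ba; apply: contrapT => noy; apply: Ba.
have dBa := dual_ideal_adjoin dB (fun y By ya0 => noy (ex_intro2 _ _ y By ya0)).
have [[x Bx] _] := dB.
rewrite -(Bmax _ dBa); first by exists x => //; exact: meet_ler.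
by move=> y By; exists y => //; exact: meet_lel.
Qed.

End DualIdeals.

Lemma ball_of_le_half (R : realFieldType) (x y e : R) :
  0 < e -> x - e / 2 <= y <= x + e / 2 -> ball x e y.
Proof.
move=> e0 /andP[xy yx]; rewrite -ball_normE /= ltr_norml.
by apply/andP; split; lra.
Qed.

Section SpectralFunction.
Set Implicit Arguments. Unset Strict Implicit.
Variables (L : SigmaOML) (R : realType) (E : R -> L) (a b : R).
Hypothesis E_mono : forall l m, l <= m -> Defs.le (E l) (E m).
Hypothesis E_zero : forall l, l < a -> E l = Defs.zero L.
Hypothesis E_one : forall l, b <= l -> E l = Defs.one L.

Lemma quasipoint_dual_ideal (B : quasipoint L) : dual_ideal (proj1_sig B).
Proof. exact: (proj2_sig B).1. Qed.

Lemma quasipoint_E_neq0 (B : quasipoint L) :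
  [set l | proj1_sig B (E l)] !=set0.
Proof.
exists b; rewrite /= E_one ?lexx //.
exact: dual_ideal_one (quasipoint_dual_ideal B).
Qed.

Lemma quasipoint_E_lbound (B : quasipoint L) :
  lbound [set l | proj1_sig B (E l)] a.
Proof.
have [_ [_ [B0 _]]] := quasipoint_dual_ideal B.
by move=> l /= Bl; rewrite leNgt; apply/negP => la; apply: B0; rewrite -(E_zero la).
Qed.

Lemma f_E_le (B : quasipoint L) l : proj1_sig B (E l) -> f_E E B <= l.
Proof. by move=> Bl; apply: ge_inf => //; exists a; apply: quasipoint_E_lbound. Qed.

Lemma mem_of_f_E_lt (B : quasipoint L) l : f_E E B < l -> proj1_sig B (E l).
Proof.
have [_ [Bup _]] := quasipoint_dual_ideal B.
move=> /(inf_lt (quasipoint_E_neq0 B)) [m /= Bm ml].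
by apply: Bup Bm _; apply/E_mono/ltW.
Qed.

Lemma ge_f_E_of_meet_zero (B : quasipoint L) y m :
  proj1_sig B y -> Defs.meet y (E m) = Defs.zero L -> m <= f_E E B.
Proof.
have [_ [Bup [B0 BI]]] := quasipoint_dual_ideal B.
move=> By ym0; apply: lb_le_inf; first exact: quasipoint_E_neq0.
move=> l /= Bl; rewrite leNgt; apply/negP => lm.
by apply: B0; rewrite -ym0; apply: BI => //; apply: Bup Bl _; apply/E_mono/ltW.
Qed.

Lemma f_E_nbhs_bounded (B : quasipoint L) m n : m < f_E E B < n ->
  exists c, proj1_sig B c /\
    (forall B' : quasipoint L, proj1_sig B' c -> m <= f_E E B' <= n).
Proof.
move=> /andP[mB Bn].
have Bm : ~ proj1_sig B (E m) by move=> /f_E_le; rewrite leNgt mB.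
have [y By ym0] := quasipoint_meet_zero (proj2_sig B) Bm.
have [_ [_ [_ BI]]] := quasipoint_dual_ideal B.
exists (Defs.meet y (E n)); split; first exact/BI/mem_of_f_E_lt.
move=> B' B'c; have [_ [B'up _]] := quasipoint_dual_ideal B'.
apply/andP; split.
- by apply: ge_f_E_of_meet_zero ym0; apply: B'up B'c _; apply: meet_lel.
- by apply: f_E_le; apply: B'up B'c _; apply: meet_ler.
Qed.

End SpectralFunction.

Theorem proposition2p8 (L : SigmaOML) (R : realType) (E : R -> L) :
  bounded_spectral_family E ->
  forall V : set R, open V -> stone_open (f_E E @^-1` V).
Proof.
move=> [[E_mono _] [a [b [_ [E_zero E_one]]]]] V Vo B VB.
have /nbhs_ballP [e /= e0 eV] := Vo _ VB.
set l0 := f_E E B.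
have l0_in : l0 - e / 2 < l0 < l0 + e / 2 by apply/andP; split; lra.
have [c [Bc cV]] := f_E_nbhs_bounded E_mono E_zero E_one l0_in.
by exists c; split => // B' /cV /(ball_of_le_half e0) /eV.
Qed.
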